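(* Let $I$ be a nonempty set and let $\mathcal{M}_I$ be the Banach algebra whose underlying Banach space is $\ell^1(I\times I)$ with product $(ab)(i,j)=\sum_{k\in I}a(i,k)b(k,j)$ for $a,b\in\mathcal{M}_I$, $i,j\in I$. Regard $\ell^1(I)$ as a Banach $\mathcal{M}_I$-bimodule via $(a\cdot b)(i)=\sum_{k\in I}a(i,k)b(k)$ and $(b\cdot a)(i)=\sum_{k\in I}b(k)a(k,i)$ for $a\in\mathcal{M}_I$, $b\in\ell^1(I)$, $i\in I$. Then the map $\nu:\ell^1(I)\hat{\otimes}_{\mathcal{M}_I}\ell^1(I)\to\mathbb{C}$ determined by $\nu(a\otimes b)=\sum_{i\in I}a(i)b(i)$ is a well-defined isomorphism of Banach spaces (the first factor being regarded as a right and the second as a left $\mathcal{M}_I$-module).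
   Context: $\hat{\otimes}$ denotes the completed projective tensor product of Banach spaces. For a Banach algebra $A$, a right Banach $A$-module $E$ and a left Banach $A$-module $F$, the module tensor product $E\hat{\otimes}_A F$ is the quotient Banach space $(E\hat{\otimes}F)/N$, where $N$ is the closed linear span of $\{x\cdot a\otimes y-x\otimes a\cdot y: x\in E,\ y\in F,\ a\in A\}$. *)

From HB Require Import structures.
From mathcomp Require Import all_boot all_order all_algebra.
From mathcomp Require Import all_classical all_reals.
From mathcomp Require Import complex.
Set Implicit Arguments. Unset Strict Implicit. Unset Printing Implicit Defensive.
Import Order.TTheory GRing.Theory Num.Theory.
Local Open Scope ring_scope.
Local Open Scope complex_scope.

Section L1.
Variable R : realType.
Notation C := (R[i]).

Definition summable (I : choiceType) (f : I -> C) : Prop :=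
  exists M : C, forall s : seq I, uniq s -> \sum_(i <- s) `|f i| <= M.

Definition has_sum (I : choiceType) (f : I -> C) (l : C) : Prop :=
  forall e : C, 0 < e -> exists s0 : seq I, forall s : seq I,
    uniq s -> {subset s0 <= s} -> `|\sum_(i <- s) f i - l| <= e.

Definition lsum (I : choiceType) (f : I -> C) : C := xget 0 [set l | has_sum f l].

Definition l1norm (I : choiceType) (f : I -> C) : C := lsum (fun i => `|f i|).

Definition lact (I : choiceType) (a : I * I -> C) (y : I -> C) : I -> C :=
  fun i => lsum (fun k => a (i, k) * y k).
Definition ract (I : choiceType) (x : I -> C) (a : I * I -> C) : I -> C :=
  fun i => lsum (fun k => x k * a (k, i)).

Definition bilform (I : choiceType) := (I -> C) -> (I -> C) -> C.

Definition bbil1 (I : choiceType) (phi : bilform I) : Prop :=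
  (forall (c : C) x x' y, summable x -> summable x' -> summable y ->
     phi (c *: x + x') y = c * phi x y + phi x' y) /\
  (forall (c : C) x y y', summable x -> summable y -> summable y' ->
     phi x (c *: y + y') = c * phi x y + phi x y') /\
  (forall x y, summable x -> summable y -> `|phi x y| <= l1norm x * l1norm y).

(* Completed projective tensor product l^1(I) \hat\otimes l^1(I), realized
   (isometrically) as the norm closure of the algebraic tensor product inside
   its bidual, i.e. inside the dual of the space of bounded bilinear forms. *)
Definition tens (I : choiceType) := bilform I -> C.

Definition elt (I : choiceType) (x y : I -> C) : tens I := fun phi => phi x y.

(* projective norm of T is <= c  (dual norm over the unit ball of forms) *)
Definition pnorm_le (I : choiceType) (T : tens I) (c : C) : Prop :=
  forall phi, bbil1 phi -> `|T phi| <= c.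

Definition ptens (I : choiceType) : set (tens I) :=
  [set T | forall e : C, 0 < e -> exists s : seq ((I -> C) * (I -> C)),
     (forall p, p \in s -> summable p.1 /\ summable p.2) /\
     pnorm_le (T - \sum_(p <- s) elt p.1 p.2) e].

(* N : closed linear span of the x.a (x) y - x (x) a.y *)
Definition balanced_gen (I : choiceType) (x : I -> C) (a : I * I -> C) (y : I -> C)
  : tens I := elt (ract x a) y - elt x (lact a y).

Definition Nsub (I : choiceType) : set (tens I) :=
  [set U | forall e : C, 0 < e ->
     exists s : seq (C * ((I -> C) * (I * I -> C) * (I -> C))),
     (forall p, p \in s ->
        [/\ summable p.2.1.1, summable p.2.1.2 & summable p.2.2]) /\
     pnorm_le (U - \sum_(p <- s) p.1 *: balanced_gen p.2.1.1 p.2.1.2 p.2.2) e].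

(* quotient norm of the class of T in (l^1 \hat\otimes l^1)/N is <= d *)
Definition qnorm_le (I : choiceType) (T : tens I) (d : C) : Prop :=
  forall e : C, 0 < e -> exists U, Nsub U /\ pnorm_le (T - U) (d + e).

End L1.

(* Tensors are functionals on bounded bilinear forms, so nu is evaluation at
   the pairing <x, y> = sum_i x(i) y(i).  This form has norm at most 1 and, by
   Fubini, vanishes on every generator x.a (x) y - x (x) a.y of N; hence nu is
   well defined and contractive on the quotient.  Conversely, for the Dirac
   mass d at some i0 and the matrix a with row i0 equal to x and all other rows
   zero, d.a = x and a.y = <x, y> d, so x (x) y agrees with d (x) <x, y> d modulo
   N.  Every tensor T therefore lies, modulo N, within any e of
   d (x) nu(T) d, whose norm is |nu(T)|. *)
From HB Require Import structures.
From mathcomp Require Import all_boot all_order all_algebra.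
From mathcomp Require Import all_classical all_reals.
From mathcomp Require Import complex ring lra.
Import Order.TTheory GRing.Theory Num.Theory.
Local Open Scope ring_scope.
Local Open Scope complex_scope.
Set Implicit Arguments. Unset Strict Implicit. Unset Printing Implicit Defensive.

Lemma sum_split_subset (T : eqType) (V : nmodType) (f : T -> V) (s t : seq T) :
  uniq s -> uniq t -> {subset s <= t} ->
  \sum_(i <- t) f i = \sum_(i <- s) f i + \sum_(i <- t | i \notin s) f i.
Proof.
move=> us ut st; rewrite (bigID (fun i => i \in s)) /=; congr (_ + _).
rewrite -big_filter; apply: perm_big; apply: uniq_perm => //.
  exact: filter_uniq.
by move=> x; rewrite mem_filter; case xs: (x \in s) => //=; rewrite st.
Qed.

Lemma sum_le_subset (T : eqType) (V : numDomainType) (f : T -> V) (s t : seq T) :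
  (forall i, 0 <= f i) -> uniq s -> uniq t -> {subset s <= t} ->
  \sum_(i <- s) f i <= \sum_(i <- t) f i.
Proof.
move=> f0 us ut st; rewrite (sum_split_subset f us ut st) lerDl.
exact: sumr_ge0.
Qed.

Section UnorderedSums.
Variables (R : realType) (T : choiceType).
Local Notation C := R[i].
Implicit Types (f g : T -> C) (l m : C).

Lemma has_sum_unique f l m : has_sum f l -> has_sum f m -> l = m.
Proof.
move=> fl fm; apply/eqP; rewrite -subr_eq0 -normr_le0; apply/ler_addgt0Pr.
move=> e e0; rewrite add0r.
have e20 : 0 < e / 2 by rewrite divr_gt0.
have [s0 Hs0] := fl _ e20; have [s1 Hs1] := fm _ e20.
pose s := undup (s0 ++ s1).
have us : uniq s by apply: undup_uniq.
have -> : l - m = (\sum_(i <- s) f i - m) - (\sum_(i <- s) f i - l) by ring.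
apply: le_trans (ler_normB _ _) _; rewrite [e](splitr e); apply: lerD.
  by apply: Hs1 => // x xs; rewrite mem_undup mem_cat xs orbT.
by apply: Hs0 => // x xs; rewrite mem_undup mem_cat xs.
Qed.

Lemma lsumE f l : has_sum f l -> lsum f = l.
Proof. by move=> fl; apply: xget_unique => // m /has_sum_unique; apply. Qed.

Lemma has_sum0 : has_sum (fun _ : T => 0 : C) 0.
Proof. by move=> e e0; exists [::] => s _ _; rewrite big1 // subrr normr0 ltW. Qed.

Lemma has_sumD f g l m :
  has_sum f l -> has_sum g m -> has_sum (fun i => f i + g i) (l + m).
Proof.
move=> fl gm e e0; have e20 : 0 < e / 2 by rewrite divr_gt0.
have [s0 Hs0] := fl _ e20; have [s1 Hs1] := gm _ e20.
exists (s0 ++ s1) => s us ss; rewrite big_split /=.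
have -> : \sum_(i <- s) f i + \sum_(i <- s) g i - (l + m) =
  (\sum_(i <- s) f i - l) + (\sum_(i <- s) g i - m) by ring.
apply: le_trans (ler_normD _ _) _; rewrite [e](splitr e); apply: lerD.
  by apply: Hs0 => // x xs; apply: ss; rewrite mem_cat xs.
by apply: Hs1 => // x xs; apply: ss; rewrite mem_cat xs orbT.
Qed.

Lemma has_sumZ c f l : has_sum f l -> has_sum (fun i => c * f i) (c * l).
Proof.
move=> fl e e0; have c1 : 0 < `|c| + 1 by rewrite ltr_wpDl.
have [s0 Hs0] := fl _ (divr_gt0 e0 c1); exists s0 => s us ss.
rewrite -mulr_sumr -mulrBr normrM.
apply: le_trans (ler_wpM2l (normr_ge0 _) (Hs0 s us ss)) _.
apply: le_trans (_ : (`|c| + 1) * (e / (`|c| + 1)) <= e).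
  by apply: ler_wpM2r; [rewrite ltW ?divr_gt0 | rewrite lerDl].
by rewrite mulrC divfK // gt_eqF.
Qed.

Lemma has_sumN f l : has_sum f l -> has_sum (fun i => - f i) (- l).
Proof.
move=> /(has_sumZ (-1)); rewrite mulN1r.
by congr has_sum; apply/funext => i; rewrite mulN1r.
Qed.

Lemma has_sum_finsupp f (s0 : seq T) :
  (forall i, i \notin s0 -> f i = 0) -> has_sum f (\sum_(i <- undup s0) f i).
Proof.
move=> f0 e e0; exists (undup s0) => s us ss.
rewrite (sum_split_subset f (undup_uniq s0) us ss) addrAC subrr add0r.
by rewrite big1 ?normr0 ?ltW // => i; rewrite mem_undup => /f0.
Qed.

Lemma has_sum_supp1 f i0 : (forall i, i != i0 -> f i = 0) -> has_sum f (f i0).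
Proof.
move=> f0; have := @has_sum_finsupp f [:: i0].
by rewrite /= big_seq1; apply => i; rewrite inE; apply: f0.
Qed.

Lemma norm_has_sum_le f l B :
  has_sum f l -> (forall s, uniq s -> `|\sum_(i <- s) f i| <= B) -> `|l| <= B.
Proof.
move=> fl fB; apply/ler_addgt0Pr => e e0; have [s0 Hs0] := fl _ e0.
have le_e := Hs0 _ (undup_uniq s0) (fun x => ltac:(by rewrite mem_undup)).
have -> : l = \sum_(i <- undup s0) f i - (\sum_(i <- undup s0) f i - l) by ring.
by apply: le_trans (ler_normB _ _) _; apply: lerD => //; apply/fB/undup_uniq.
Qed.

Lemma real_ge0_cplx (x : C) : 0 <= x -> x = (complex.Re x)%:C.
Proof. by case: x => a b; rewrite lecE /= => /andP[/eqP -> _]. Qed.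

Lemma normc_real (a : R) : `|a%:C| = `|a|%:C.
Proof. by rewrite normc_def /= expr0n /= addr0 sqrtr_sqr. Qed.

(* The sum is the supremum, taken in R, of the finite partial sums. *)
Lemma has_sum_ge0_bounded f (M : C) :
  (forall i, 0 <= f i) -> (forall s, uniq s -> \sum_(i <- s) f i <= M) ->
  exists2 l, has_sum f l & forall s, uniq s -> \sum_(i <- s) f i <= l.
Proof.
move=> f0 fM; pose sums : set R :=
  fun r => exists2 s, uniq s & r = complex.Re (\sum_(i <- s) f i).
have sum_ge0 s : 0 <= \sum_(i <- s) f i by apply: sumr_ge0.
have sums_sup : has_sup sums.
  split; first by exists 0; exists [::] => //; rewrite big_nil.
  exists (complex.Re M) => r [s us ->].
  by rewrite -lecR -!real_ge0_cplx ?fM // (le_trans (sum_ge0 s)) ?fM.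
have sum_le_sup s : uniq s -> complex.Re (\sum_(i <- s) f i) <= sup sums.
  by move=> us; apply: sup_upper_bound => //; exists s.
exists (sup sums)%:C; last first.
  by move=> s us; rewrite (real_ge0_cplx (sum_ge0 s)) lecR sum_le_sup.
move=> e e0; have e0' : 0 < complex.Re e by rewrite -ltcR -real_ge0_cplx // ltW.
have [r [s0 us0 ->] lt_r] := sup_adherent e0' sums_sup.
exists s0 => s us ss.
have : complex.Re (\sum_(i <- s0) f i) <= complex.Re (\sum_(i <- s) f i).
  by rewrite -lecR -!real_ge0_cplx //; apply: sum_le_subset.
have := sum_le_sup s us.
rewrite (real_ge0_cplx (sum_ge0 s)) -rmorphB normc_real (real_ge0_cplx (ltW e0)).
rewrite lecR ler_norml; move=> *; apply/andP; split; lra.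
Qed.

Lemma Re_le_norm (w : C) : 'Re w <= `|w| /\ - 'Re w <= `|w|.
Proof.
have reR : 'Re w \is Num.real by apply: Creal_Re.
have [le_Re _] := leif_normC_Re_Creal w.
by split; apply: le_trans le_Re; rewrite ?real_ler_norm // -normrN real_ler_norm ?realN.
Qed.

(* Write f as a combination of four nonnegative families dominated by 2|f|. *)
Lemma summable_has_sum f : summable f -> exists l, has_sum f l.
Proof.
move=> [M fM].
have dom (g : T -> C) : (forall i, 0 <= g i) -> (forall i, g i <= 2 * `|f i|) ->
    exists l, has_sum g l.
  move=> g0 g2; suff [l gl _] : exists2 l, has_sum g l &
      forall s, uniq s -> \sum_(i <- s) g i <= l by exists l.
  apply: (has_sum_ge0_bounded (M := 2 * M) g0) => s us.
  by apply: le_trans (ler_sum _ (fun i _ => g2 i)) _; rewrite -mulr_sumr ler_wpM2l ?fM.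
have [l1 H1] : exists l, has_sum (fun i => `|f i| + 'Re (f i)) l.
  apply: dom => i; have [A B] := Re_le_norm (f i).
    by rewrite -subr_ge0 opprK in B.
  by rewrite mulr2n mulrDl mul1r lerD2l.
have [l2 H2] : exists l, has_sum (fun i => `|f i|) l.
  by apply: dom => i //; rewrite -[X in X <= _]mul1r ler_wpM2r // ler1n.
have [l3 H3] : exists l, has_sum (fun i => `|f i| - 'Re ('i * f i)) l.
  apply: dom => i; have [A B] := Re_le_norm ('i * f i);
    rewrite normrM normCi mul1r in A B.
    by rewrite subr_ge0.
  by rewrite mulr2n mulrDl mul1r lerD2l.
exists ((l1 - l2) + 'i * (l3 - l2)).
have := has_sumD (has_sumD H1 (has_sumN H2)) (has_sumZ 'i (has_sumD H3 (has_sumN H2))).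
by congr has_sum; apply/funext => i /=; rewrite [RHS]Crect ReMil; ring.
Qed.

Lemma has_sum_lsum f : summable f -> has_sum f (lsum f).
Proof. by move=> /summable_has_sum [l fl]; rewrite (lsumE fl). Qed.

Lemma sum_le_l1norm f : summable f ->
  forall s, uniq s -> \sum_(i <- s) `|f i| <= l1norm f.
Proof.
move=> [M fM]; have [l fl l_ub] := has_sum_ge0_bounded (fun i => normr_ge0 (f i)) fM.
by rewrite /l1norm (lsumE fl).
Qed.

Lemma l1norm_ge0 f : summable f -> 0 <= l1norm f.
Proof. by move=> /sum_le_l1norm /(_ [::] isT); rewrite big_nil. Qed.

Lemma norm_le_l1norm f i : summable f -> `|f i| <= l1norm f.
Proof. by move=> /sum_le_l1norm /(_ [:: i] isT); rewrite big_seq1. Qed.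

Lemma summable_le f g c :
  summable f -> 0 <= c -> (forall i, `|g i| <= c * `|f i|) -> summable g.
Proof.
move=> [M fM] c0 gf; exists (c * M) => s us.
by apply: le_trans (ler_sum _ (fun i _ => gf i)) _; rewrite -mulr_sumr ler_wpM2l ?fM.
Qed.

Lemma summable_finsupp f (s0 : seq T) :
  (forall i, i \notin s0 -> f i = 0) -> summable f.
Proof.
move=> f0; exists (\sum_(i <- undup s0) `|f i|) => s us.
rewrite (bigID (fun i => i \in s0)) /= [X in _ + X]big1 ?addr0; last first.
  by move=> i /f0 ->; rewrite normr0.
rewrite -big_filter; apply: sum_le_subset; rewrite ?filter_uniq ?undup_uniq //.
by move=> x; rewrite mem_filter mem_undup => /andP[].
Qed.

Lemma summable0 : summable (0 : T -> C).
Proof. exact: (@summable_finsupp _ [::]). Qed.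

Lemma l1norm0 : l1norm (0 : T -> C) = 0.
Proof.
rewrite /l1norm; apply: lsumE; have := has_sum0.
by congr has_sum; apply/funext => i; rewrite normr0.
Qed.

Lemma summableM f g : summable f -> summable g -> summable (fun i => f i * g i).
Proof.
move=> sf sg; apply: (summable_le sf (l1norm_ge0 sg)) => i.
by rewrite normrM mulrC ler_wpM2r // norm_le_l1norm.
Qed.

End UnorderedSums.

Section DoubleSums.
Variables (R : realType) (T : choiceType).
Local Notation C := R[i].
Implicit Types h : T * T -> C.

Lemma has_sum_swap h l : has_sum h l -> has_sum (fun p => h (p.2, p.1)) l.
Proof.
move=> hl e e0; have [s0 Hs0] := hl _ e0.
pose sw (p : T * T) := (p.2, p.1).
have sw_inj : injective sw by move=> [a b] [c d] [-> ->].
exists (map sw s0) => s us ss; have := Hs0 (map sw s); rewrite big_map; apply.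
  by rewrite map_inj_uniq.
move=> [a b] ab; apply/mapP; exists (b, a) => //.
by apply: ss; apply/mapP; exists (a, b).
Qed.

Lemma has_sum_sum h (F : T -> C) (S : seq T) :
  (forall i, has_sum (fun k => h (k, i)) (F i)) ->
  has_sum (fun k => \sum_(i <- S) h (k, i)) (\sum_(i <- S) F i).
Proof.
move=> hF; elim: S => [|i S IH].
  by rewrite big_nil; have := @has_sum0 R T; congr has_sum; apply/funext => k; rewrite big_nil.
rewrite big_cons; have := has_sumD (hF i) IH.
by congr has_sum; apply/funext => k; rewrite big_cons.
Qed.

Lemma has_sum_iterated h (F : T -> C) l :
  has_sum h l -> (forall i, has_sum (fun k => h (k, i)) (F i)) -> has_sum F l.
Proof.
move=> hl hF e e0; have e20 : 0 < e / 2 by rewrite divr_gt0.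
have [s1 Hs1] := hl _ e20; exists (map snd s1) => S uS sS.
have [K0 HK0] := has_sum_sum S hF e20.
pose K := undup (K0 ++ map fst s1); have uK : uniq K := undup_uniq _.
pose Q := [seq (k, i) | k <- K, i <- S].
have uQ : uniq Q by apply: allpairs_uniq => // -[a b] [c d] _ _ /= [-> ->].
have sQ : {subset s1 <= Q}.
  move=> p ps; apply/allpairsP; exists p; split; last by case: p {ps}.
    by rewrite mem_undup mem_cat; apply/orP; right; apply/mapP; exists p.
  by apply: sS; apply/mapP; exists p.
have := Hs1 Q uQ sQ; rewrite big_allpairs => le_h.
have := HK0 K uK (fun x xK => ltac:(by rewrite mem_undup mem_cat xK)) => le_F.
set X := \sum_(k <- K) \sum_(i <- S) h (k, i) in le_h le_F.
have -> : \sum_(i <- S) F i - l = (X - l) - (X - \sum_(i <- S) F i) by ring.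
by apply: le_trans (ler_normB _ _) _; rewrite [e](splitr e); apply: lerD.
Qed.

Lemma summable_col h i : summable h -> summable (fun k => h (k, i)).
Proof.
move=> [M hM]; exists M => s us; have := hM (map (fun k => (k, i)) s).
by rewrite big_map; apply; rewrite map_inj_uniq // => u v [].
Qed.

Lemma summable_row h k : summable h -> summable (fun i => h (k, i)).
Proof.
move=> [M hM]; exists M => s us; have := hM (map (fun i => (k, i)) s).
by rewrite big_map; apply; rewrite map_inj_uniq // => u v [].
Qed.

End DoubleSums.

Section Pairing.
Variables (R : realType) (T : choiceType).
Local Notation C := R[i].
Implicit Types (x y : T -> C) (a : T * T -> C) (phi : bilform R T).

Definition pairing : bilform R T := fun x y => lsum (fun i => x i * y i).

Lemma pairing_bbil1 : bbil1 pairing.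
Proof.
split; [|split].
- move=> c x x' y sx sx' sy; rewrite /pairing.
  have := has_sumD (has_sumZ c (has_sum_lsum (summableM sx sy)))
                   (has_sum_lsum (summableM sx' sy)).
  by move/lsumE <-; congr lsum; apply/funext => i /=; rewrite mulrDl mulrA.
- move=> c x y y' sx sy sy'; rewrite /pairing.
  have := has_sumD (has_sumZ c (has_sum_lsum (summableM sx sy)))
                   (has_sum_lsum (summableM sx sy')).
  by move/lsumE <-; congr lsum; apply/funext => i /=; rewrite mulrDr mulrCA.
- move=> x y sx sy; apply: norm_has_sum_le (has_sum_lsum (summableM sx sy)) _.
  move=> s us; apply: le_trans (ler_norm_sum _ _ _) _.
  apply: le_trans (_ : \sum_(i <- s) `|x i| * l1norm y <= _).
    by apply: ler_sum => i _; rewrite normrM ler_wpM2l // norm_le_l1norm.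
  by rewrite -mulr_suml ler_wpM2r ?l1norm_ge0 ?sum_le_l1norm.
Qed.

(* Both sides are iterated sums of the summable family x(k) a(k, i) y(i). *)
Lemma pairing_balanced x a y : summable x -> summable a -> summable y ->
  pairing (ract x a) y = pairing x (lact a y).
Proof.
move=> sx sa sy; pose h (p : T * T) := x p.1 * a p * y p.2.
have sh : summable h.
  apply: (summable_le sa (mulr_ge0 (l1norm_ge0 sx) (l1norm_ge0 sy))) => -[k i].
  rewrite /h /= !normrM mulrAC ler_wpM2r //.
  by apply: ler_pM => //; apply: norm_le_l1norm.
have sum_k i : has_sum (fun k => h (k, i)) (ract x a i * y i).
  have := has_sumZ (y i) (has_sum_lsum (summableM sx (summable_col i sa))).
  by rewrite mulrC; congr has_sum; apply/funext => k; rewrite /h /= mulrC.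
have sum_i k : has_sum (fun i => h (k, i)) (x k * lact a y k).
  have := has_sumZ (x k) (has_sum_lsum (summableM (summable_row k sa) sy)).
  by congr has_sum; apply/funext => i; rewrite /h /= mulrA.
have hl := has_sum_lsum sh.
rewrite /pairing (lsumE (has_sum_iterated hl sum_k)).
by rewrite (lsumE (has_sum_iterated (has_sum_swap hl) sum_i)).
Qed.

Lemma bbil1_x0 phi x : bbil1 phi -> summable x -> phi x 0 = 0.
Proof.
move=> [_ [_ phi_le]] sx; have := phi_le x 0 sx (summable0 R T).
by rewrite l1norm0 mulr0 normr_le0 => /eqP.
Qed.

Lemma bbil1Zr phi x y c : bbil1 phi -> summable x -> summable y ->
  phi x (c *: y) = c * phi x y.
Proof.
move=> phi1 sx sy; have [_ [phi_lin _]] := phi1.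
by have := phi_lin c x y 0 sx sy (summable0 R T); rewrite !addr0 bbil1_x0 ?addr0.
Qed.

End Pairing.

Section RankOne.
Variables (R : realType) (I : choiceType) (i0 : I).
Local Notation C := R[i].
Implicit Types x y : I -> C.

Definition dirac : I -> C := fun i => if i == i0 then 1 else 0.

Definition row_matrix x : I * I -> C := fun p => if p.1 == i0 then x p.2 else 0.

Lemma summable_dirac : summable dirac.
Proof. by apply: (@summable_finsupp _ _ _ [:: i0]) => i; rewrite inE /dirac => /negbTE ->. Qed.

Lemma l1norm_dirac : l1norm dirac = 1.
Proof.
apply: lsumE; have := @has_sum_supp1 _ _ (fun i => `|dirac i|) i0.
by rewrite /dirac eqxx normr1; apply => i /negbTE ->; rewrite normr0.
Qed.

Lemma pairing_dirac c : pairing (c *: dirac) dirac = c.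
Proof.
have scaleE i : (c *: dirac) i = c * dirac i by [].
apply: lsumE; have := @has_sum_supp1 _ _ (fun i => (c *: dirac) i * dirac i) i0.
by rewrite scaleE /dirac eqxx !mulr1; apply => i /negbTE Ni; rewrite scaleE Ni !mulr0.
Qed.

Lemma summable_row_matrix x : summable x -> summable (row_matrix x).
Proof.
move=> [M xM]; exists M => s us.
rewrite (bigID (fun p => p.1 == i0)) /= [X in _ + X]big1 ?addr0; last first.
  by move=> p /negbTE p1; rewrite /row_matrix p1 normr0.
rewrite -big_filter; set s0 := [seq p <- s | p.1 == i0].
have -> : \sum_(p <- s0) `|row_matrix x p| = \sum_(k <- map snd s0) `|x k|.
  rewrite big_map big_seq [RHS]big_seq; apply: eq_bigr => p.
  by rewrite mem_filter /row_matrix => /andP[-> _].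
apply: xM; rewrite map_inj_in_uniq ?filter_uniq //.
by move=> [a b] [c d]; rewrite !mem_filter /= => /andP[/eqP -> _] /andP[/eqP -> _] ->.
Qed.

Lemma ract_dirac_row_matrix x : ract dirac (row_matrix x) = x.
Proof.
apply/funext => i; apply: lsumE.
have := @has_sum_supp1 _ _ (fun k => dirac k * row_matrix x (k, i)) i0.
by rewrite /dirac /row_matrix /= eqxx mul1r; apply => k /negbTE ->; rewrite mul0r.
Qed.

Lemma lact_row_matrix x y : lact (row_matrix x) y = pairing x y *: dirac.
Proof.
apply/funext => i; have -> : (pairing x y *: dirac) i = pairing x y * dirac i by [].
rewrite /lact /row_matrix /= /dirac.
case: (i == i0); first by rewrite mulr1.
rewrite mulr0; apply: lsumE; have := @has_sum0 R I.
by congr has_sum; apply/funext => k; rewrite mul0r.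
Qed.

Lemma balanced_gen_row_matrix x y :
  balanced_gen dirac (row_matrix x) y = elt x y - elt dirac (pairing x y *: dirac).
Proof. by rewrite /balanced_gen ract_dirac_row_matrix lact_row_matrix. Qed.

End RankOne.

Section Quotient.
Variables (R : realType) (I : choiceType) (i0 : I).
Local Notation C := R[i].
Local Notation delta := (dirac R i0).
Implicit Types (T U : tens R I) (d : C).

Lemma Nsub_pairing U : Nsub U -> U (@pairing R I) = 0.
Proof.
move=> NU; apply/eqP; rewrite -normr_le0; apply/ler_addgt0Pr => e e0.
have [s [ss Us]] := NU _ e0; rewrite add0r.
have := Us _ (@pairing_bbil1 R I); rewrite fct_sumE !fctE /= big_seq big1 ?subr0 //.
move=> p /ss [sx sa sy] /=.
by rewrite !fctE /balanced_gen !fctE /elt pairing_balanced // subrr scaler0.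
Qed.

Lemma qnorm_le_pairing T d : qnorm_le T d -> `|T (@pairing R I)| <= d.
Proof.
move=> Td; apply/ler_addgt0Pr => e e0; have [U [NU TU]] := Td _ e0.
have := TU _ (@pairing_bbil1 R I).
by rewrite !fctE /= (Nsub_pairing NU) subr0.
Qed.

Lemma Nsub_sum_balanced (J : eqType) (s : seq J) (x : J -> I -> C)
    (a : J -> I * I -> C) (y : J -> I -> C) :
  (forall j, j \in s -> [/\ summable (x j), summable (a j) & summable (y j)]) ->
  Nsub (\sum_(j <- s) balanced_gen (x j) (a j) (y j)).
Proof.
move=> sxay e e0; exists [seq (1, (x j, a j, y j)) | j <- s]; split.
  by move=> p /mapP [j js ->]; apply: sxay.
move=> phi _; rewrite big_map.
under eq_bigr do rewrite scale1r.
by rewrite subrr normr0 ltW.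
Qed.

Lemma ptens_elt (x y : I -> C) : summable x -> summable y -> ptens (elt x y).
Proof.
move=> sx sy e e0; exists [:: (x, y)]; split.
  by move=> p; rewrite inE => /eqP ->.
by move=> phi _; rewrite big_seq1 subrr normr0 ltW.
Qed.

Lemma pairing_qnorm_le T : ptens T -> qnorm_le T `|T (@pairing R I)|.
Proof.
move=> ptT e e0; have e20 : 0 < e / 2 by rewrite divr_gt0.
have [s [ss TS]] := ptT _ e20.
pose S := \sum_(p <- s) elt p.1 p.2.
pose U := \sum_(p <- s) balanced_gen delta (row_matrix i0 p.1) p.2.
exists U; split.
  apply: Nsub_sum_balanced => p /ss [sx sy].
  by split=> //; [apply: summable_dirac | apply: summable_row_matrix].
move=> phi phi1; set z := T (@pairing R I).
have U_phi : U phi = S phi - S (@pairing R I) * phi delta delta.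
  rewrite /U /S !fct_sumE mulr_suml -sumrB big_seq [RHS]big_seq.
  apply: eq_bigr => p /ss [sx sy]; rewrite balanced_gen_row_matrix /=.
  by rewrite !fctE /elt /= bbil1Zr //; apply: summable_dirac.
have le_dirac : `|phi delta delta| <= 1.
  have [_ [_ phi_le]] := phi1.
  by have := phi_le _ _ (summable_dirac R i0) (summable_dirac R i0); rewrite l1norm_dirac mulr1.
have le_S : `|S (@pairing R I)| <= `|z| + e / 2.
  have := TS _ (@pairing_bbil1 R I); move=> le_zS.
  have -> : S (@pairing R I) = z - (z - S (@pairing R I)) by ring.
  by apply: le_trans (ler_normB _ _) _; apply: lerD.
have -> : (T - U) phi = (T phi - S phi) + S (@pairing R I) * phi delta delta.
  by rewrite !fctE /= U_phi; ring.
have -> : `|z| + e = e / 2 + (`|z| + e / 2) by rewrite [e in LHS]splitr; ring.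
apply: le_trans (ler_normD _ _) _; apply: lerD; first exact: TS.
by rewrite normrM; apply: le_trans (ler_wpM2l (normr_ge0 _) le_dirac) _; rewrite mulr1.
Qed.

End Quotient.

Theorem lemma1 (R : realType) (I : choiceType) (i0 : I) :
  exists nu : tens R I -> R[i],
    (forall (c : R[i]) T U, ptens T -> ptens U ->
       nu (c *: T + U) = c * nu T + nu U) /\
    (forall a b : I -> R[i], summable a -> summable b ->
       nu (elt a b) = lsum (fun i => a i * b i)) /\
    (exists K : R[i], 0 < K /\
       forall T d, ptens T -> qnorm_le T d -> `|nu T| <= K * d) /\
    (forall z : R[i], exists T, ptens T /\ nu T = z) /\
    (exists c : R[i], 0 < c /\ forall T, ptens T -> qnorm_le T (c * `|nu T|)).
Proof.
exists (fun T => T (@pairing R I)); split; [|split; [|split; [|split]]].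
- by [].
- by [].
- exists 1; split=> [|T d _ Td]; first exact: ltr01.
  by rewrite mul1r; apply: qnorm_le_pairing.
- move=> z; exists (elt (z *: dirac R i0) (dirac R i0)); split; last exact: pairing_dirac.
  by apply: ptens_elt; [apply: (summable_le (summable_dirac R i0) (normr_ge0 z)) |
    apply: summable_dirac] => i; rewrite normrM.
- exists 1; split=> [|T ptT]; first exact: ltr01.
  by rewrite mul1r; apply: pairing_qnorm_le.
Qed.
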